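(* Let $V\subsetneq(\mathbb C^* )^n$ be a proper algebraic subvariety and $\mathcal A=\operatorname{Log}(V)$. Then for a generic direction $u\in S^{n-1}$ (i.e. for all $u$ outside a closed nowhere dense subset of $S^{n-1}$) and every line $\ell=\{p+su: s\in\mathbb R\}\subset\mathbb R^n$ with direction $u$, the intersection $\mathcal A\cap\ell$ is compact.
   Context: $\operatorname{Log}(z_1,\dots,z_n)=(\log|z_1|,\dots,\log|z_n|)$; $\operatorname{Log}(V)$ is the amoeba of $V$. *)

From HB Require Import structures.
From mathcomp Require Import all_boot all_order all_algebra.
From mathcomp Require Import all_classical all_reals all_analysis.
From mathcomp Require Import complex.
From mathcomp Require mpoly.
Set Implicit Arguments. Unset Strict Implicit. Unset Printing Implicit Defensive.
Import Order.TTheory GRing.Theory Num.Theory.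
Import numFieldNormedType.Exports.
Local Open Scope classical_set_scope.
Local Open Scope ring_scope.

Definition cmod (R : realType) (z : complex R) : R :=
  Num.sqrt (complex.Re z ^+ 2 + complex.Im z ^+ 2).

Definition torus (R : realType) (n : nat) : set ('I_n -> complex R) :=
  [set z | forall i, z i != 0].

Definition zero_locus (R : realType) (n : nat) (S : set (mpoly.mpoly n (complex R)))
  : set ('I_n -> complex R) :=
  [set z | torus z /\ forall f, S f -> mpoly.meval z f = 0].

Definition is_subvariety (R : realType) (n : nat) (V : set ('I_n -> complex R)) : Prop :=
  exists S : set (mpoly.mpoly n (complex R)), V = zero_locus S.

Definition Log (R : realType) (n : nat) (z : 'I_n -> complex R) : 'rV[R]_n :=
  \row_i ln (cmod (z i)).

Definition amoeba (R : realType) (n : nat) (V : set ('I_n -> complex R)) : set 'rV[R]_n :=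
  (@Log R n) @` V.

Definition sphere (R : realType) (n : nat) : set 'rV[R]_n :=
  [set u | \sum_(i < n) (u ord0 i) ^+ 2 = 1].

Definition line (R : realType) (n : nat) (p u : 'rV[R]_n) : set 'rV[R]_n :=
  [set p + s *: u | s in [set: R]].

Definition nowhere_dense_in (R : realType) (n : nat) (S N : set 'rV[R]_n) : Prop :=
  forall O : set 'rV[R]_n, open O -> O `&` S `<=` N -> O `&` S = set0.

From HB Require Import structures.
From mathcomp Require Import all_boot all_order all_algebra.
From mathcomp Require Import all_classical all_reals all_analysis.
From mathcomp Require Import complex.
From mathcomp Require mpoly.
From mathcomp Require Import ring lra.
Import Order.TTheory GRing.Theory Num.Theory.
Import numFieldNormedType.Exports.
Local Open Scope classical_set_scope.
Local Open Scope ring_scope.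

(* Pick f in the defining family that does not vanish on the whole torus. Over the point
   p + s u of a line, the monomial c_m z^m of f has modulus |c_m| e^<m,p> e^(s <m,u>).
   If u is orthogonal to no difference of two exponents of f, the numbers <m,u> are
   pairwise distinct, so as s -> +oo (resp. -oo) the monomial with the largest (resp.
   smallest) <m,u> dominates all the others and f cannot vanish: the parameters s of the
   points of the amoeba on the line are bounded. The exceptional directions lie on
   finitely many great spheres, a closed nowhere dense subset of the sphere. Finally the
   intersection of the amoeba with the line is the continuous image of the compact set of
   pairs (s, arguments of z) with |s| <= M and z in V. *)

(* mpoly is not imported (its notations clash with those of analysis), so the
   eqType structure of multinomials has to be made canonical by hand. *)
Canonical mpoly.mpoly_multinom__canonical__eqtype_Equality.

Lemma continuous_sum {R : realType} {T : topologicalType} {I : Type}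
    (r : seq I) (F : I -> T -> R) :
  (forall i, continuous (F i)) -> continuous (fun x => \sum_(i <- r) F i x).
Proof.
move=> cF; elim: r => [|i r IH] x.
  by under eq_fun do rewrite big_nil; exact: cst_continuous.
by under eq_fun do rewrite big_cons; apply: continuousD; [exact: cF|exact: IH].
Qed.

Lemma closed_level_set {R : realType} {T : topologicalType} (f : T -> R) (c : R) :
  continuous f -> closed [set x | f x = c].
Proof. by move=> cf; move: (closed_eq (y := c)); apply: (continuous_closedP f).1. Qed.

Section directions.
Context {R : realType} {n : nat}.
Implicit Types (d u v : 'rV[R]_n) (ds : seq 'rV[R]_n).

Definition dotv d u : R := \sum_i d ord0 i * u ord0 i.

Lemma dotvB (a b u : 'rV[R]_n) : dotv (a - b) u = dotv a u - dotv b u.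
Proof. by rewrite /dotv -sumrB; apply: eq_bigr => i _; rewrite !mxE mulrBl. Qed.

Lemma dotvN d u : dotv d (- u) = - dotv d u.
Proof. by rewrite /dotv -sumrN; apply: eq_bigr => i _; rewrite !mxE mulrN. Qed.

Lemma dotvC u v : dotv u v = dotv v u.
Proof. by apply: eq_bigr => i _; rewrite mulrC. Qed.

Lemma dotvDZ d (a b : R) u v : dotv d (a *: u + b *: v) = a * dotv d u + b * dotv d v.
Proof. by rewrite /dotv !mulr_sumr -big_split; apply: eq_bigr => i _; rewrite /= !mxE; ring. Qed.

Lemma sphereE : @sphere R n = [set u | dotv u u = 1].
Proof. by apply/funext => u; rewrite /sphere /dotv /=; under eq_bigr do rewrite expr2. Qed.

Lemma dotvv_gt0 d : d != 0 -> 0 < dotv d d.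
Proof.
move=> d0; have sq_ge0 i : 0 <= d ord0 i * d ord0 i by rewrite -expr2 sqr_ge0.
rewrite lt_def sumr_ge0 // andbT; apply: contra d0 => /eqP dd0.
apply/eqP/rowP => i; rewrite mxE.
by move: (psumr_eq0P (fun j _ => sq_ge0 j) dd0 (i := i) isT) => /eqP; rewrite mulf_eq0 orbb => /eqP.
Qed.

Lemma continuous_dotv d : continuous (dotv d).
Proof.
apply: (continuous_sum _ (fun i u => d ord0 i * u ord0 i)) => i x.
by apply: continuousM; [exact: cst_continuous|exact: coord_continuous].
Qed.

Lemma closed_sphere : closed (@sphere R n).
Proof.
apply: closed_level_set; apply: (continuous_sum _ (fun i u => u ord0 i ^+ 2)) => i x.
under eq_fun do rewrite expr2.
by apply: continuousM; exact: coord_continuous.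
Qed.

Lemma sphere_perturb {d u} {P : set 'rV[R]_n} :
  d != 0 -> sphere u -> dotv d u = 0 -> nbhs u P ->
  exists2 v, P v & sphere v /\ dotv d v != 0.
Proof.
rewrite sphereE => d0 /= uu du Pu; have k_gt0 := dotvv_gt0 d d0; set k := dotv d d in k_gt0.
(* a rational parametrisation of the great circle through u with tangent d *)
pose q : {poly R} := 1 + k *: 'X^2.
pose v t := ((1 - k *: 'X^2).[t] / q.[t]) *: u + ((2 *: 'X).[t] / q.[t]) *: d.
have hornerE := (hornerD, hornerN, hornerZ, hornerXn, hornerC, hornerX).
have q_gt0 t : 0 < q.[t] by rewrite !hornerE; have := sqr_ge0 t; nra.
have dv t : dotv d (v t) = 2 * t / q.[t] * k by rewrite dotvDZ du -/k !hornerE; ring.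
have vv t : dotv (v t) (v t) = 1.
  rewrite dotvDZ dotvC dotvDZ uu dotvC du dotvC dv.
  by move: (q_gt0 t); rewrite !hornerE => ?; field; rewrite gt_eqF.
have cv : continuous v.
  have cf (p : {poly R}) : continuous (fun t : R => p.[t] / q.[t]).
    move=> t; apply: (continuousM (x := t)); first exact: continuous_horner.
    exact: continuousV (lt0r_neq0 (q_gt0 t)) (@continuous_horner _ q t).
  move=> t; apply: (continuousD (x := t)); apply: (continuousZ (x := t));
    by [exact: cf | exact: cst_continuous].
have /nbhs_ballP[e e_gt0 ballP] : nbhs (0 : R) (v @^-1` P).
  apply: cv; rewrite /v !hornerE expr0n /=.
  by rewrite !(mulr0, subr0, addr0, invr1, mul1r, mul0r, scale1r, scale0r).
have e2_gt0 : 0 < e / 2 by rewrite divr_gt0.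
exists (v (e / 2)); last by rewrite vv dv !mulf_neq0 ?gt_eqF ?invr_gt0.
apply: ballP; rewrite -ball_normE /= sub0r normrN gtr0_norm //.
by rewrite ltr_pdivrMr // ltr_pMr // ltr1n.
Qed.

Lemma open_all_dotv_neq0 ds : open [set v | all (fun d => dotv d v != 0) ds].
Proof.
elim: ds => [|d ds IH] /=; first by rewrite (_ : [set v | _] = setT); [exact: openT|apply/seteqP].
have -> : [set v | (dotv d v != 0) && all (fun d => dotv d v != 0) ds] =
    dotv d @^-1` [set x | x != 0] `&` [set v | all (fun d => dotv d v != 0) ds].
  by apply/seteqP; split => v /= /andP.
by apply: openI IH; apply: open_comp (@open_neq _ 0) => v _; exact: continuous_dotv.
Qed.

Lemma sphere_dense_all_dotv_neq0 {ds} {O : set 'rV[R]_n} {u} :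
  all (fun d => d != 0) ds -> open O -> O u -> sphere u ->
  exists2 v, O v & sphere v /\ all (fun d => dotv d v != 0) ds.
Proof.
elim: ds => [|d ds IH] /=; first by move=> _ _ Ou su; exists u.
case/andP => d0 /IH {}IH oO Ou su; have [v Ov [sv dsv]] := IH oO Ou su.
have [dv0|dv_neq0] := eqVneq (dotv d v) 0; last by exists v; rewrite ?dv_neq0.
have Wv : nbhs v (O `&` [set v | all (fun d => dotv d v != 0) ds]).
  by apply: open_nbhs_nbhs; split; [exact: openI (open_all_dotv_neq0 ds)|].
by have [w [Ow dsw] [sw dw]] := sphere_perturb d0 sv dv0 Wv; exists w; rewrite ?dw.
Qed.

Definition orthogonal_directions ds : set 'rV[R]_n :=
  @sphere R n `&` [set u | has (fun d => dotv d u == 0) ds].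

Lemma closed_orthogonal_directions ds : closed (orthogonal_directions ds).
Proof.
apply: closedI closed_sphere _.
have -> : [set u | has (fun d => dotv d u == 0) ds] = ~` [set v | all (fun d => dotv d v != 0) ds].
  by apply/seteqP; split => v /=; rewrite -[has _ _]negbK -all_predC => /negP.
by rewrite closedC; exact: open_all_dotv_neq0.
Qed.

Lemma nowhere_dense_orthogonal_directions ds :
  all (fun d => d != 0) ds -> nowhere_dense_in (@sphere R n) (orthogonal_directions ds).
Proof.
move=> ds0 O oO ON; apply/seteqP; split => // u [Ou su].
have [v Ov [sv /allP dsv]] := sphere_dense_all_dotv_neq0 ds0 oO Ou su.
have [_ /hasP[d dds /eqP dv0]] := ON v (conj Ov sv).
by move: (dsv d dds); rewrite dv0 eqxx.
Qed.

End directions.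

Section complex_continuity.
Context {R : realType} {T : topologicalType}.
Implicit Types (F G : T -> complex R).

Lemma ReD (x y : complex R) : complex.Re (x + y) = complex.Re x + complex.Re y.
Proof. by case: x; case: y. Qed.

Lemma ImD (x y : complex R) : complex.Im (x + y) = complex.Im x + complex.Im y.
Proof. by case: x; case: y. Qed.

Lemma ReM (x y : complex R) :
  complex.Re (x * y) = complex.Re x * complex.Re y - complex.Im x * complex.Im y.
Proof. by case: x; case: y. Qed.

Lemma ImM (x y : complex R) :
  complex.Im (x * y) = complex.Re x * complex.Im y + complex.Im x * complex.Re y.
Proof. by case: x; case: y. Qed.

(* complex R carries no topology: continuity is that of the real and imaginary parts *)
Definition ccontinuous F :=
  continuous (fun x => complex.Re (F x)) /\ continuous (fun x => complex.Im (F x)).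

Lemma ccontinuous_cst (c : complex R) : ccontinuous (fun=> c).
Proof. by split=> x; exact: cst_continuous. Qed.

Lemma ccontinuousD F G : ccontinuous F -> ccontinuous G -> ccontinuous (fun x => F x + G x).
Proof.
move=> [F1 F2] [G1 G2]; split.
- under eq_fun do rewrite ReD.
  by move=> x; apply: (continuousD (x := x)); [exact: F1|exact: G1].
- under eq_fun do rewrite ImD.
  by move=> x; apply: (continuousD (x := x)); [exact: F2|exact: G2].
Qed.

Lemma ccontinuousM F G : ccontinuous F -> ccontinuous G -> ccontinuous (fun x => F x * G x).
Proof.
move=> [F1 F2] [G1 G2]; split.
- under eq_fun do rewrite ReM.
  move=> x; apply: (continuousB (x := x)).
    by apply: (continuousM (x := x)); [exact: F1|exact: G1].
  by apply: (continuousM (x := x)); [exact: F2|exact: G2].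
- under eq_fun do rewrite ImM.
  move=> x; apply: (continuousD (x := x)).
    by apply: (continuousM (x := x)); [exact: F1|exact: G2].
  by apply: (continuousM (x := x)); [exact: F2|exact: G1].
Qed.

Lemma ccontinuous_sum (I : Type) (r : seq I) (F : I -> T -> complex R) :
  (forall i, ccontinuous (F i)) -> ccontinuous (fun x => \sum_(i <- r) F i x).
Proof.
move=> cF; elim: r => [|i r IH]; first by under eq_fun do rewrite big_nil; exact: ccontinuous_cst.
by under eq_fun do rewrite big_cons; exact: ccontinuousD.
Qed.

Lemma ccontinuous_prod (I : Type) (r : seq I) (F : I -> T -> complex R) :
  (forall i, ccontinuous (F i)) -> ccontinuous (fun x => \prod_(i <- r) F i x).
Proof.
move=> cF; elim: r => [|i r IH]; first by under eq_fun do rewrite big_nil; exact: ccontinuous_cst.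
by under eq_fun do rewrite big_cons; exact: ccontinuousM.
Qed.

Lemma ccontinuousX F k : ccontinuous F -> ccontinuous (fun x => F x ^+ k).
Proof.
move=> cF; elim: k => [|k IH]; first by under eq_fun do rewrite expr0; exact: ccontinuous_cst.
by under eq_fun do rewrite exprS; exact: ccontinuousM.
Qed.

Lemma ccontinuous_meval n (Z : T -> 'I_n -> complex R) (g : mpoly.mpoly n (complex R)) :
  (forall i, ccontinuous (fun x => Z x i)) -> ccontinuous (fun x => mpoly.meval (Z x) g).
Proof.
move=> cZ; under eq_fun do rewrite mpoly.mevalE.
apply: ccontinuous_sum => m; apply: ccontinuousM; first exact: ccontinuous_cst.
by apply: ccontinuous_prod => i; exact: ccontinuousX.
Qed.

Lemma closed_ccontinuous_eq0 F : ccontinuous F -> closed [set x | F x = 0].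
Proof.
move=> [cRe cIm].
have -> : [set x | F x = 0] = [set x | complex.Re (F x) = 0] `&` [set x | complex.Im (F x) = 0].
  by apply/seteqP; split=> x /=; case: (F x) => a b //= [-> ->].
by apply: closedI; exact: closed_level_set.
Qed.

End complex_continuity.

Lemma seq_argmax {R : realType} {I : eqType} {r : seq I} (U : I -> R) :
  r != [::] -> exists2 b, b \in r & forall i, i \in r -> U i <= U b.
Proof.
elim: r => // j [|k r] IH _; first by exists j => [|i]; rewrite ?mem_seq1 // => /eqP ->.
have [b br Ub] := IH isT.
have [Ujb|Ubj] := leP (U j) (U b).
  by exists b => [|i]; rewrite in_cons ?br ?orbT // => /orP[/eqP ->|/Ub].
exists j => [|i]; rewrite in_cons ?eqxx // => /orP[/eqP -> //|/Ub Uib].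
exact: le_trans Uib (ltW Ubj).
Qed.

Lemma exp_dominant_term {R : realType} {I : eqType} {r : seq I} {a U : I -> R} {b : I} :
  0 < a b -> (forall i, 0 <= a i) -> (forall i, i \in r -> i != b -> U i < U b) ->
  \forall s \near +oo,
    \sum_(i <- r | i != b) a i * expR (s * U i) < a b * expR (s * U b).
Proof.
move=> ab_gt0 a_ge0 Ub.
have gap_gt0 i : i \in r -> i != b -> 0 < U b - U i by move=> ir ib; rewrite subr_gt0 Ub.
pose C := \sum_(i <- r | i != b) a i / (U b - U i).
have C_ge0 : 0 <= C.
  by rewrite /C big_seq_cond sumr_ge0 // => i /andP[ir ib]; rewrite divr_ge0 // ltW ?gap_gt0.
exists (C / a b); split=> [|s]; first exact: num_real.
rewrite ltr_pdivrMr // => Cs.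
have s_gt0 : 0 < s by rewrite -(pmulr_lgt0 _ ab_gt0); exact: le_lt_trans Cs.
(* e^x >= 1 + x > x for the gap x = s (U b - U i) *)
have term i : i \in r -> i != b ->
    a i * expR (s * U i) <= a i / (U b - U i) / s * expR (s * U b).
  move=> ir ib; have d_gt0 := gap_gt0 i ir ib.
  have -> : a i / (U b - U i) / s * expR (s * U b) =
      a i * expR (s * U i) * (expR (s * (U b - U i)) / (s * (U b - U i))).
    have -> : s * U b = s * U i + s * (U b - U i) by ring.
    by rewrite expRD; field; rewrite !gt_eqF.
  rewrite ler_peMr ?mulr_ge0 ?expR_ge0 // ler_pdivlMr ?mulr_gt0 // mul1r.
  by apply: le_trans (expR_ge1Dx _); rewrite lerDr.
apply: (@le_lt_trans _ _ (C / s * expR (s * U b))).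
  rewrite /C !mulr_suml big_seq_cond [X in _ <= X]big_seq_cond.
  by apply: ler_sum => i /andP[ir ib]; exact: term.
by rewrite ltr_pM2r ?expR_gt0 // ltr_pdivrMr // mulrC.
Qed.

Section monomials_on_lines.
Context {R : realType} {n : nat}.
Local Open Scope complex_scope.
Implicit Types (p u : 'rV[R]_n) (z : 'I_n -> complex R) (f : mpoly.mpoly n (complex R)).

Lemma normC_cmod (z : complex R) : `|z| = (cmod z)%:C.
Proof. by case: z. Qed.

Lemma cmod_gt0 (z : complex R) : z != 0 -> 0 < cmod z.
Proof. by move=> z0; rewrite -ltcR -normC_cmod normr_gt0. Qed.

Definition expv (m : mpoly.multinom n) : 'rV[R]_n := \row_i (mpoly.fun_of_multinom m i)%:R.

Lemma expv_inj : injective expv.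
Proof.
move=> m1 m2 /rowP e12; apply/mpoly.mnmP => i.
by move: (e12 i); rewrite !mxE => /eqP; rewrite eqr_nat => /eqP.
Qed.

(* z lies over the point p + s u of the line, i.e. Log z = p + s u *)
Definition over_line p u (s : R) z := forall i, cmod (z i) = expR (p ord0 i + s * u ord0 i).

Lemma over_lineN {p u s z} : over_line p u s z -> over_line p (- u) (- s) z.
Proof. by move=> zs i; rewrite zs mxE mulrNN. Qed.

Lemma norm_monomial_over_line {p u} {s : R} {z} (c : complex R) (m : mpoly.multinom n) :
  over_line p u s z ->
  `|c * \prod_(i < n) z i ^+ mpoly.fun_of_multinom m i| =
    (cmod c * expR (dotv (expv m) p) * expR (s * dotv (expv m) u))%:C.
Proof.
move=> zs; rewrite normrM normr_prod normC_cmod.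
under eq_bigr => i _ do rewrite normrX normC_cmod zs -rmorphXn.
rewrite -rmorph_prod -rmorphM -mulrA -expRD /dotv mulr_sumr -big_split expR_sum.
by congr (_ * _)%:C; apply: eq_bigr => i _; rewrite !mxE -expRM_natl mulrDr mulrCA.
Qed.

(* the monomial with the largest <m, u> dominates all the others *)
Lemma meval_neq0_near_pinfty f p u :
  mpoly.msupp f != [::] -> {in mpoly.msupp f &, injective (fun m => dotv (expv m) u)} ->
  \forall s \near +oo, forall z, over_line p u s z -> mpoly.meval z f != 0.
Proof.
move=> f0 u_inj; set ms := mpoly.msupp f.
have [b bms Ub] := seq_argmax (fun m => dotv (expv m) u) f0.
pose a m := cmod (mpoly.mcoeff m f) * expR (dotv (expv m) p).
have ab_gt0 : 0 < a b by rewrite mulr_gt0 ?expR_gt0 // cmod_gt0 // -mpoly.mcoeff_msupp.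
have a_ge0 m : 0 <= a m by rewrite mulr_ge0 ?expR_ge0 ?sqrtr_ge0.
have Ub_strict m : m \in ms -> m != b -> dotv (expv m) u < dotv (expv b) u.
  move=> mms mb; rewrite lt_def Ub // andbT; apply: contra mb => /eqP e.
  by apply/eqP; apply: u_inj => //; rewrite e.
apply: filterS (exp_dominant_term ab_gt0 a_ge0 Ub_strict) => s dom z zs.
rewrite mpoly.mevalE (bigD1_seq b) ?mpoly.msupp_uniq //= addr_eq0; apply/negP => /eqP lead_eq.
have : `|mpoly.mcoeff b f * \prod_(i < n) z i ^+ mpoly.fun_of_multinom b i| <=
    \sum_(m <- ms | m != b) `|mpoly.mcoeff m f * \prod_(i < n) z i ^+ mpoly.fun_of_multinom m i|.
  by rewrite lead_eq normrN ler_norm_sum.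
rewrite (norm_monomial_over_line _ _ zs).
under eq_bigr => m _ do rewrite (norm_monomial_over_line _ _ zs).
by rewrite -rmorph_sum lecR leNgt dom.
Qed.

End monomials_on_lines.

Section bounded_intersection.
Context {R : realType} {n : nat}.
Implicit Types (p u : 'rV[R]_n) (ms : seq (mpoly.multinom n)).

Definition exponent_diffs ms : seq 'rV[R]_n :=
  [seq d <- [seq expv a - expv b | a <- ms, b <- ms] | d != 0].

Lemma exponent_diffs_neq0 ms : all (fun d => d != 0) (exponent_diffs ms).
Proof. exact: filter_all. Qed.

Lemma separating_direction {ms u} :
  ~~ has (fun d => dotv d u == 0) (exponent_diffs ms) ->
  {in ms &, injective (fun m => dotv (expv m) u)}.
Proof.
move=> /hasPn sep m1 m2 m1s m2s e12; apply: (@expv_inj R); apply/subr0_eq/eqP; apply: contraT => d0.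
have d_diff : expv m1 - expv m2 \in exponent_diffs ms.
  by rewrite mem_filter d0 /=; apply: allpairs_f.
by move: (sep _ d_diff); rewrite dotvB e12 subrr eqxx.
Qed.

Lemma over_line_Log {p u s} {z : 'I_n -> complex R} :
  torus z -> Log z = p + s *: u -> over_line p u s z.
Proof.
move=> tz zs i; have := congr1 (fun M : 'rV[R]_n => M ord0 i) zs; rewrite !mxE => <-.
by rewrite lnK // posrE cmod_gt0.
Qed.

Lemma amoeba_line_bounded {S : set (mpoly.mpoly n (complex R))} {f u} :
  S f -> mpoly.msupp f != [::] ->
  ~~ has (fun d => dotv d u == 0) (exponent_diffs (mpoly.msupp f)) ->
  forall p, exists M, forall z s, zero_locus S z -> Log z = p + s *: u -> `|s| <= M.
Proof.
move=> Sf f0 sep p.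
have sepN : ~~ has (fun d => dotv d (- u) == 0) (exponent_diffs (mpoly.msupp f)).
  by rewrite (eq_has (a2 := fun d => dotv d u == 0)) // => d; rewrite dotvN oppr_eq0.
have [M1 [_ fM1]] := meval_neq0_near_pinfty f p u f0 (separating_direction sep).
have [M2 [_ fM2]] := meval_neq0_near_pinfty f p (- u) f0 (separating_direction sepN).
exists (`|M1| + `|M2|) => z s [tz fz] zs; have zs' := over_line_Log tz zs.
have s_le : s <= M1.
  by rewrite leNgt; apply/negP => /fM1/(_ z zs')/negP; apply; rewrite fz.
have Ns_le : - s <= M2.
  by rewrite leNgt; apply/negP => /fM2/(_ z (over_lineN zs'))/negP; apply; rewrite fz.
have := ler_norm M1; have := ler_norm M2; have := normr_ge0 M1; have := normr_ge0 M2.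
by rewrite ler_norml => *; apply/andP; split; lra.
Qed.

End bounded_intersection.

Definition unit_circle {R : realType} : set (R * R) := [set w | w.1 ^+ 2 + w.2 ^+ 2 = 1].

Lemma compact_unit_circle (R : realType) : compact (@unit_circle R).
Proof.
have -> : @unit_circle R = (`[-1, 1] `*` `[-1, 1]) `&` unit_circle.
  apply/seteqP; split=> [[a b] /= ab|w []//]; split=> //.
  move: ab; rewrite /unit_circle /= !expr2 => ab.
  by rewrite !in_itv /=; split; apply/andP; split; nra.
apply: compact_closedI; first by apply: compact_setX; exact: segment_compact.
apply: closed_level_set => w; apply: (continuousD (x := w)); rewrite /GRing.exp /=.
  by apply: (continuousM (x := w)); exact: cvg_fst.
by apply: (continuousM (x := w)); exact: cvg_snd.
Qed.

Section polar_parametrisation.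
Context {R : realType} {n : nat}.
Local Open Scope complex_scope.
Local Notation params := (R * prod_topology (fun _ : 'I_n => (R * R)%type))%type.
Implicit Types (p u : 'rV[R]_n) (x : params).

(* the point over p + x.1 u whose arguments are the unit vectors x.2 i *)
Definition polar_point p u x : 'I_n -> complex R := fun i =>
  (expR (p ord0 i + x.1 * u ord0 i) * (x.2 i).1) +i* (expR (p ord0 i + x.1 * u ord0 i) * (x.2 i).2).

Definition polar_box (M : R) : set params := `[- M, M] `*` [set w | forall i, unit_circle (w i)].

Lemma compact_polar_box M : compact (polar_box M).
Proof.
apply: compact_setX; first exact: segment_compact.
apply: (@tychonoff _ (fun _ => (R * R)%type) (fun _ => unit_circle)) => i.
exact: compact_unit_circle.
Qed.

Lemma ccontinuous_polar_point p u i : ccontinuous (fun x => polar_point p u x i).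
Proof.
have c_rad : continuous (fun x : params => expR (p ord0 i + x.1 * u ord0 i)).
  move=> x; apply: (continuous_comp (f := fun x : params => p ord0 i + x.1 * u ord0 i));
    last exact: continuous_expR.
  apply: (continuousD (x := x)); first exact: cst_continuous.
  by apply: (continuousM (x := x)); [exact: cvg_fst|exact: cst_continuous].
have c_arg (c : R * R -> R) : continuous c -> continuous (fun x : params => c (x.2 i)).
  move=> cc x; apply: (continuous_comp (f := fun x : params => x.2 i)) (cc _).
  apply: (@continuous_comp _ _ _ snd (fun w : prod_topology _ => w i)); first exact: cvg_snd.
  exact: (@proj_continuous _ (fun _ => (R * R)%type) i).
by split=> x; apply: (continuousM (x := x)); [exact: c_rad|apply: c_arg => w; exact: cvg_fst|
  exact: c_rad|apply: c_arg => w; exact: cvg_snd].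
Qed.

Lemma cmod_polar_point p u x i :
  unit_circle (x.2 i) -> cmod (polar_point p u x i) = expR (p ord0 i + x.1 * u ord0 i).
Proof. by move=> xi; rewrite /cmod /= !exprMn -mulrDr xi mulr1 sqrtr_sqr gtr0_norm ?expR_gt0. Qed.

End polar_parametrisation.

Section amoeba_line.
Context {R : realType} {n : nat}.
Local Notation params := (R * prod_topology (fun _ : 'I_n => (R * R)%type))%type.
Implicit Types (S : set (mpoly.mpoly n (complex R))) (p u : 'rV[R]_n).

Lemma amoeba_line_polarE {S p u} {M : R} :
  (forall z s, zero_locus S z -> Log z = p + s *: u -> `|s| <= M) ->
  amoeba (zero_locus S) `&` line p u =
  (fun x : params => p + x.1 *: u) @`
    (polar_box M `&` \bigcap_(g in S) [set x | mpoly.meval (polar_point p u x) g = 0]).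
Proof.
move=> bound; apply/seteqP; split.
  move=> _ [[z [tz fz] <-] [s _ zs]]; have zs' := over_line_Log tz (esym zs).
  have cmod_neq0 i : cmod (z i) != 0 by rewrite gt_eqF // cmod_gt0.
  pose w i := (complex.Re (z i) / cmod (z i), complex.Im (z i) / cmod (z i)).
  have zE : polar_point p u (s, w) = z.
    apply/funext => i; rewrite /polar_point /= -zs' !(mulrC (cmod (z i))) !divfK //.
    by case: (z i).
  exists (s, w); last by rewrite /= zs.
  split=> [|g Sg]; last by rewrite /= zE; exact: fz.
  split; first by rewrite /= in_itv /= -ler_norml; exact: bound (conj tz fz) (esym zs).
  move=> i; have cmod2 : cmod (z i) ^+ 2 = complex.Re (z i) ^+ 2 + complex.Im (z i) ^+ 2.
    by rewrite /cmod sqr_sqrtr // addr_ge0 // sqr_ge0.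
  by rewrite /unit_circle /= !expr_div_n -mulrDl -cmod2 divff // expf_neq0.
move=> _ [x [[_ xc] xV] <-]; set z := polar_point p u x.
have zs i : cmod (z i) = expR (p ord0 i + x.1 * u ord0 i) by exact: cmod_polar_point.
have tz : torus z.
  move=> i; apply/negP => /eqP zi0; have := expR_gt0 (p ord0 i + x.1 * u ord0 i).
  by rewrite -zs zi0 /cmod /= expr0n /= addr0 sqrtr0 ltxx.
split; last by exists x.1.
exists z; first by split=> // g Sg; exact: xV.
by apply/rowP => i; rewrite !mxE zs expRK.
Qed.

Lemma compact_amoeba_line {S p u} {M : R} :
  (forall z s, zero_locus S z -> Log z = p + s *: u -> `|s| <= M) ->
  compact (amoeba (zero_locus S) `&` line p u).
Proof.
move=> bound; rewrite (amoeba_line_polarE bound); apply: continuous_compact.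
  apply: continuous_subspaceT => x; apply: (continuousD (x := x)); first exact: cst_continuous.
  by apply: (continuousZ (x := x)); [exact: cvg_fst|exact: cst_continuous].
apply: compact_closedI (compact_polar_box M) _; apply: closed_bigI => g _.
by apply/closed_ccontinuous_eq0/ccontinuous_meval => i; exact: ccontinuous_polar_point.
Qed.

Lemma proper_zero_locus_nonzero {S} :
  ~ (@torus R n `<=` zero_locus S) -> exists2 f, S f & mpoly.msupp f != [::].
Proof.
move=> not_torus; apply: contrapT => all_zero; apply: not_torus => z tz; split=> // f Sf.
have /eqP f0 : mpoly.msupp f == [::] by apply: contrapT => /negP f0; apply: all_zero; exists f.
by rewrite mpoly.mevalE f0 big_nil.
Qed.

End amoeba_line.

Theorem mainTheorem4 (R : realType) (n : nat) (V : set ('I_n -> complex R)) :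
  is_subvariety V -> V `<` @torus R n ->
  exists N : set 'rV[R]_n,
    [/\ N `<=` @sphere R n, closed N, nowhere_dense_in (@sphere R n) N &
        forall u, @sphere R n u -> ~ N u ->
          forall p : 'rV[R]_n, compact (amoeba V `&` line p u)].
Proof.
move=> [S ->] [_ not_torus]; have [f Sf f0] := proper_zero_locus_nonzero not_torus.
pose ds : seq 'rV[R]_n := exponent_diffs (mpoly.msupp f).
exists (orthogonal_directions ds); split.
- by move=> u [].
- exact: closed_orthogonal_directions.
- exact: nowhere_dense_orthogonal_directions ds (exponent_diffs_neq0 _).
move=> u su Nu p.
have sep : ~~ has (fun d => dotv d u == 0) ds by apply/negP => ?; apply: Nu.
have [M bound] := amoeba_line_bounded Sf f0 sep p.
exact: compact_amoeba_line bound.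
Qed.
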